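(* Consider the censored multi-armed bandit setting with $\mathcal A_t=[d]$ for all $t$, fix $\lambda>0$ and $\alpha\in(0,1]$, and let $\psi_\alpha(x)=\frac{x^{1-\alpha}}{1-\alpha}$ if $\alpha<1$ and $\psi_1(x)=\log x$. Let $\Pi_{\mathrm{off}}$ be the class of offline policies, i.e. those whose action sequence $(a_1,\dots,a_T)$ is chosen in advance, without observing any censorship indicators. Then, as $T\to\infty$, $$\max_{\pi\in\Pi_{\mathrm{off}}}\mathbb{E}[\mathbb V_\alpha(T,\pi)]\sim d_{\mathrm{eff}}\,\psi_\alpha\Big(\frac{T}{d_{\mathrm{eff}}}+\lambda\Big),$$ where $\mathbb V_\alpha(T,\pi)=\sum_{t=1}^T(N_{a_t}(t-1)+\lambda)^{-\alpha}$.
   Context: Censored multi-armed bandit setting: $d\ge1$ arms; at each round $t=1,\dots,T$ the agent picks $a_t\in[d]$ and a censorship indicator $x_{a_t}\sim\mathrm{Bernoulli}(p_{a_t})$ is drawn independently of everything else given $a_t$, with fixed $p_a\in(0,1]$. $N_a(t)=\#\{l\le t:a_l=a,\ x_{a_l}=1\}$ and $d_{\mathrm{eff}}=\sum_{a\in[d]}1/p_a$. *)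

From HB Require Import structures.
From mathcomp Require Import all_boot all_order all_algebra.
From mathcomp Require Import all_classical all_reals all_analysis.
Set Implicit Arguments. Unset Strict Implicit. Unset Printing Implicit Defensive.
Import Order.TTheory GRing.Theory Num.Theory.
Local Open Scope ring_scope.

Section CensoredBandit.
Variables (R : realType) (d : nat) (p : 'I_d -> R) (lam alpha : R).

Definition psi (x : R) : R :=
  if alpha < 1 then x `^ (1 - alpha) / (1 - alpha) else ln x.

Definition deff : R := \sum_(a < d) (p a)^-1.

(* Rounds t = 1..T are indexed by t : 'I_T (round t+1).
   An offline policy is an action sequence a : 'I_T -> 'I_d fixed in advance.
   x t is the censorship indicator observed at round t. *)

Definition Nprev (T : nat) (a : {ffun 'I_T -> 'I_d}) (x : {ffun 'I_T -> bool})
  (t : 'I_T) : nat :=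
  #|[set s : 'I_T | [&& (s < t)%N, a s == a t & x s]]|.

Definition Valpha (T : nat) (a : {ffun 'I_T -> 'I_d}) (x : {ffun 'I_T -> bool})
  : R :=
  \sum_(t < T) ((Nprev a x t)%:R + lam) `^ (- alpha).

(* law of the censorship indicators for the action sequence a:
   independent, x_t ~ Bernoulli(p_{a_t}) *)
Definition probx (T : nat) (a : {ffun 'I_T -> 'I_d}) (x : {ffun 'I_T -> bool})
  : R :=
  \prod_(t < T) (if x t then p (a t) else 1 - p (a t)).

Definition EV (T : nat) (a : {ffun 'I_T -> 'I_d}) : R :=
  \sum_(x : {ffun 'I_T -> bool}) probx a x * Valpha a x.

(* max over offline (deterministic) action sequences; all values are >= 0
   and the index set is finite and nonempty when d >= 1, so this is the max *)
Definition OptOff (T : nat) : R :=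
  \big[Num.max/0]_(a : {ffun 'I_T -> 'I_d}) EV a.

End CensoredBandit.

From HB Require Import structures.
From mathcomp Require Import all_boot all_order all_algebra.
From mathcomp Require Import all_classical all_reals all_analysis.
From mathcomp Require Import ring lra.
Import Order.TTheory GRing.Theory Num.Theory.
Import numFieldNormedType.Exports.
Set Implicit Arguments. Unset Strict Implicit. Unset Printing Implicit Defensive.
Local Open Scope ring_scope.

(* Write g(y) = (y + lambda)^(-alpha), so that psi_alpha is an antiderivative
   of g(. - lambda), and X = T / d_eff + lambda.  We sandwich the optimal
   offline value between d_eff * psi(X) - O(d_eff) and d_eff * psi(X) + O(d_eff).
   - Upper bound, for every action sequence (EV_le): N_{a_t}(t-1) does not
     depend on x_t, so importance weighting turns E[V] into
     E[sum_i (1/p_i) sum_{k < S_i} g(k)], with S_i the number of uncensored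
     pulls of arm i.  Comparing with the integral of g and linearizing psi at
     X bounds this affinely in sum_i S_i / p_i, whose mean is exactly T.
   - Lower bound, for a balanced sequence (OptOff_ge): Jensen's inequality for
     the convex g replaces each censored count by its mean p_i k; pulling arm
     i about T / (d_eff p_i) times is realizable, and the integral comparison
     from below gives d_eff * psi(X) - O(d_eff).
   - Since psi is unbounded, a bounded error becomes negligible in the ratio
     (ratio_cvg1). *)

Section ConcavityInequalities.
Variable R : realType.

Lemma powR_le_tangent1 (b u : R) : 0 < b <= 1 -> 0 < u -> u `^ b <= 1 + b * (u - 1).
Proof.
move=> /andP[b_gt0 b_le1] u_gt0.
have [->|b_neq1] := eqVneq b 1.
  by rewrite powRr1 ?(ltW u_gt0) // mul1r addrC subrK.
have b_lt1 : b < 1 by rewrite lt_neqAle b_neq1 b_le1.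
have inv_b_gt0 : 0 < b^-1 by rewrite invr_gt0.
have inv_b'_gt0 : 0 < (1 - b)^-1 by rewrite invr_gt0 subr_gt0.
(* Young's inequality with the conjugate exponents 1/b and 1/(1-b) *)
have := conjugate_powR (powR_ge0 u b) ler01 inv_b_gt0 inv_b'_gt0.
rewrite !invrK powR1 mulr1 -powRrM mulfV ?gt_eqF // powRr1 ?(ltW u_gt0) //.
by rewrite [b + _]addrC subrK => /(_ erefl); rewrite mul1r; lra.
Qed.

Lemma ln_le_tangent (a b : R) : 0 < a -> 0 < b -> ln b - ln a <= a^-1 * (b - a).
Proof.
move=> a_gt0 b_gt0.
have ba_gt0 : 0 < b / a by rewrite divr_gt0.
have -> : ln b - ln a = ln (1 + (b / a - 1)).
  by rewrite [1 + _]addrC subrK lnM ?posrE ?invr_gt0 // lnV ?posrE.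
apply: le_trans (le_ln1Dx _) _; first lra.
by rewrite mulrBr mulrC mulVf ?gt_eqF.
Qed.

End ConcavityInequalities.

Section Psi.
Variables (R : realType) (alpha : R).
Hypothesis alpha_range : 0 < alpha <= 1.

(* psi_alpha is concave with derivative x ^ (-alpha): it lies below its
   tangents. *)
Lemma psi_le_tangent (a b : R) : 0 < a -> 0 < b ->
  psi alpha b - psi alpha a <= a `^ (- alpha) * (b - a).
Proof.
case/andP: alpha_range => alpha_gt0 alpha_le1 a_gt0 b_gt0; rewrite /psi.
case: ifPn => [alpha_lt1|]; last first.
  rewrite -leNgt => alpha_ge1.
  have -> : alpha = 1 by apply/eqP; rewrite eq_le alpha_le1.
  by rewrite powR_inv1 ?(ltW a_gt0) //; apply: ln_le_tangent.
set be := 1 - alpha.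
have be_gt0 : 0 < be by rewrite subr_gt0.
set u := b / a.
have u_gt0 : 0 < u by rewrite divr_gt0.
have b_eq : b = a * u by rewrite /u mulrCA mulfV ?gt_eqF // mulr1.
have a_be_gt0 : 0 < a `^ be by rewrite powR_gt0.
have -> : a `^ (- alpha) * (b - a) = a `^ be * (u - 1).
  rewrite b_eq -[X in _ * (_ - X)]mulr1 -mulrBr mulrA; congr (_ * _).
  rewrite /be addrC powRD; last by apply/implyP => _; rewrite gt_eqF.
  by rewrite powRr1 // ltW.
rewrite b_eq (powRM _ (ltW a_gt0) (ltW u_gt0)).
have : u `^ be <= 1 + be * (u - 1).
  by apply: powR_le_tangent1 => //; rewrite be_gt0 /be; lra.
have -> : a `^ be * u `^ be / be - a `^ be / be = a `^ be * ((u `^ be - 1) / be).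
  by field; rewrite gt_eqF.
move=> bernoulli; apply: ler_wpM2l; first exact: ltW.
by rewrite ler_pdivrMr //; lra.
Qed.

Lemma psi_le (u v : R) : 0 < u -> u <= v -> psi alpha u <= psi alpha v.
Proof.
move=> u_gt0 uv; have v_gt0 : 0 < v by apply: lt_le_trans uv.
have := psi_le_tangent v_gt0 u_gt0.
have : v `^ (- alpha) * (u - v) <= 0 by rewrite mulr_ge0_le0 ?powR_ge0 ?subr_le0.
lra.
Qed.

Lemma psi_unbounded (K : R) : exists X0, forall X, X0 <= X -> K <= psi alpha X.
Proof.
case/andP: alpha_range => alpha_gt0 _; rewrite /psi.
have [alpha_lt1|alpha_ge1] := boolP (alpha < 1); last first.
  exists (expR `|K|) => X le_X.
  have X_gt0 : 0 < X by apply: lt_le_trans le_X; exact: expR_gt0.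
  by rewrite (le_trans (ler_norm K)) // -[X in X <= _]expRK ler_ln ?posrE ?expR_gt0.
set be := 1 - alpha.
have be_gt0 : 0 < be by rewrite subr_gt0.
set y := `|K| * be + 1.
have y_gt0 : 0 < y by rewrite /y ltr_wpDl // mulr_ge0 // ltW.
exists (y `^ be^-1) => X le_X.
have X_gt0 : 0 < X by apply: lt_le_trans le_X; exact: powR_gt0.
have : (y `^ be^-1) `^ be <= X `^ be.
  apply: ge0_ler_powR => //; first exact: ltW.
    by rewrite nnegrE powR_ge0.
  by rewrite nnegrE ltW.
rewrite -powRrM mulVf ?gt_eqF // (powRr1 (ltW y_gt0)) ler_pdivlMr // => le_y.
apply: le_trans le_y; rewrite /y.
have : K * be <= `|K| * be by rewrite ler_pM2r // ler_norm.
lra.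
Qed.

Lemma powRN_ge_tangent (A B : R) : 0 < A -> 0 < B ->
  B `^ (- alpha) - alpha * (B `^ (- alpha) / B) * (A - B) <= A `^ (- alpha).
Proof.
case/andP: alpha_range => alpha_gt0 alpha_le1 A_gt0 B_gt0.
set u := A / B.
have u_gt0 : 0 < u by rewrite divr_gt0.
have A_eq : A = u * B by rewrite /u divfK ?gt_eqF.
have -> : B `^ (- alpha) - alpha * (B `^ (- alpha) / B) * (A - B)
   = B `^ (- alpha) * (1 - alpha * (u - 1)).
  by rewrite A_eq; field; rewrite gt_eqF.
rewrite A_eq (powRM _ (ltW u_gt0) (ltW B_gt0)) mulrC.
apply: ler_wpM2r; first by rewrite powR_ge0.
rewrite powRN.
have ua_gt0 : 0 < u `^ alpha by rewrite powR_gt0.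
have bernoulli : u `^ alpha <= 1 + alpha * (u - 1).
  by apply: powR_le_tangent1; rewrite ?alpha_gt0.
have [le0|gt0] := lerP (1 - alpha * (u - 1)) 0.
  by apply: le_trans le0 _; rewrite invr_ge0 ltW.
rewrite -[X in _ <= X]div1r ler_pdivlMr //.
have := ler_wpM2l (ltW gt0) bernoulli.
have := sqr_ge0 (alpha * (u - 1)); lra.
Qed.

Lemma powRN_le (u v : R) : 0 < u -> u <= v -> v `^ (- alpha) <= u `^ (- alpha).
Proof.
case/andP: alpha_range => alpha_gt0 _ u_gt0 uv.
have v_gt0 := lt_le_trans u_gt0 uv.
rewrite !powRN lef_pV2 ?posrE ?powR_gt0 //.
apply: ge0_ler_powR => //; rewrite ?nnegrE ltW //.
Qed.

End Psi.

Section Gain.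
Variables (R : realType) (lam alpha : R).
Hypotheses (lam_gt0 : 0 < lam) (alpha_range : 0 < alpha <= 1).

(* The reward collected at a round whose arm has been observed y times. *)
Definition gain (y : R) : R := (y + lam) `^ (- alpha).

Lemma gain_ge0 y : 0 <= gain y.
Proof. exact: powR_ge0. Qed.

Lemma gain_jensen (I : finType) (w f : I -> R) :
  (forall i, 0 <= w i) -> \sum_i w i = 1 -> (forall i, 0 <= f i) ->
  gain (\sum_i w i * f i) <= \sum_i w i * gain (f i).
Proof.
move=> w_ge0 w_sum1 f_ge0.
set m := \sum_i w i * f i.
have m_ge0 : 0 <= m by apply: sumr_ge0 => i _; rewrite mulr_ge0.
set c := alpha * ((m + lam) `^ (- alpha) / (m + lam)).
have tangent i : w i * (gain m - c * (f i - m)) <= w i * gain (f i).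
  apply: ler_wpM2l => //.
  have -> : f i - m = (f i + lam) - (m + lam) by ring.
  by apply: powRN_ge_tangent; rewrite ?ltr_wpDl.
apply: le_trans (ler_sum _ (fun i _ => tangent i)).
have -> : \sum_i w i * (gain m - c * (f i - m))
        = \sum_i ((gain m + c * m) * w i - c * (w i * f i)).
  by apply: eq_bigr => i _; ring.
by rewrite sumrB -!mulr_sumr w_sum1 -/m; lra.
Qed.

(* Integral comparison from above: sum_{k<S} gain k <= gain 0 + int_0^S. *)
Lemma sum_gain_le S :
  \sum_(k < S) gain k%:R <= lam `^ (- alpha) + psi alpha (S%:R + lam) - psi alpha lam.
Proof.
case: S => [|S]; first by rewrite big_ord0 add0r addrK powR_ge0.
rewrite big_ord_recl /gain add0r -addrA lerD2l.
pose f k := psi alpha (k%:R + lam).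
have shifted_gt0 k : 0 < k%:R + lam by rewrite ltr_wpDl.
have step (k : 'I_S) : gain (bump 0 k)%:R <= f k.+1 - f k.
  have := psi_le_tangent alpha_range (shifted_gt0 k.+1) (shifted_gt0 k).
  have -> : k%:R + lam - (k.+1%:R + lam) = -1 by rewrite -natr1; ring.
  rewrite /gain /f /bump /= add1n; lra.
apply: le_trans (ler_sum _ (fun k _ => step k)) _.
rewrite -(big_mkord xpredT (fun k => f k.+1 - f k)) telescope_sumr // /f add0r.
by rewrite lerD2r psi_le ?ltr_wpDl ?lerD2r ?ler_nat.
Qed.

(* Combining the previous bound with the tangent of psi at M > 0 linearizes it
   in S, which is what allows averaging over the censorship indicators. *)
Lemma sum_gain_le_linear (M : R) S : 0 < M ->
  \sum_(k < S) gain k%:R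
  <= lam `^ (- alpha) - psi alpha lam + psi alpha M
     + M `^ (- alpha) * (S%:R + lam - M).
Proof.
move=> M_gt0; apply: le_trans (sum_gain_le S) _.
have := psi_le_tangent alpha_range M_gt0 (ltr_wpDl (ler0n _ S) lam_gt0); lra.
Qed.

(* Integral comparison from below, on the grid q * k. *)
Lemma sum_gain_scaled_ge (q : R) m : 0 < q ->
  (psi alpha (q * m%:R + lam) - psi alpha lam) / q <= \sum_(k < m) gain (q * k%:R).
Proof.
move=> q_gt0.
pose f k := psi alpha (q * k%:R + lam) / q.
have grid_gt0 k : 0 < q * k%:R + lam by rewrite ltr_wpDl // mulr_ge0 // ltW.
have step (k : 'I_m) : f k.+1 - f k <= gain (q * k%:R).
  have := psi_le_tangent alpha_range (grid_gt0 k) (grid_gt0 k.+1).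
  have -> : q * k.+1%:R + lam - (q * k%:R + lam) = q by rewrite -natr1; ring.
  by rewrite /f -mulrBl ler_pdivrMr.
apply: le_trans (ler_sum _ (fun k _ => step k)).
rewrite -(big_mkord xpredT (fun k => f k.+1 - f k)) telescope_sumr //.
by rewrite /f mulr0 add0r mulrBl.
Qed.

End Gain.

Section PrefixCounting.
Variables (V : zmodType) (T : nat) (P : pred 'I_T).

Definition prefix (n : nat) : {set 'I_T} := [set t : 'I_T | (t < n)%N && P t].

Lemma sum_prefix_card (F : nat -> V) n :
  \sum_(t in prefix n) F #|prefix t| = \sum_(k < #|prefix n|) F k.
Proof.
elim: n => [|n IH].
  have -> : prefix 0 = finset.set0 by apply/setP => t; rewrite !inE ltn0.
  by rewrite big_set0 cards0 big_ord0.
case: (pickP (fun s : 'I_T => (val s == n) && P s)) => [s|no_n]; last first.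
  suff -> : prefix n.+1 = prefix n by [].
  apply/setP => t; rewrite !inE ltnS leq_eqVlt.
  by case: eqP => [t_eq|] //=; move: (no_n t); rewrite /= t_eq eqxx ltnn /= => ->.
move=> /andP[/eqP s_eq Ps].
have s_notin : s \notin prefix n by rewrite inE s_eq ltnn.
have -> : prefix n.+1 = s |: prefix n.
  apply/setP => t; rewrite !inE ltnS leq_eqVlt -s_eq -val_eqE.
  by case: eqP => [/val_inj ->|] //=; rewrite Ps.
by rewrite big_setU1 //= cardsU1 s_notin IH big_ord_recr /= addrC s_eq.
Qed.

Lemma sum_rank (F : nat -> V) :
  \sum_(t | P t) F #|[set s : 'I_T | (s < t)%N && P s]|
  = \sum_(k < #|[set t : 'I_T | P t]|) F k.
Proof.
have all_T : prefix T = [set t | P t] by apply/setP => t; rewrite !inE ltn_ord.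
rewrite -all_T -sum_prefix_card; apply: eq_bigl => t.
by rewrite all_T inE.
Qed.

End PrefixCounting.

Lemma card_sum_indicator (R : numDomainType) T (P Q : pred 'I_T) :
  (#|[set t | P t && Q t]|)%:R = \sum_(t | P t) ((Q t)%:R : R).
Proof.
rewrite -sum1dep_card natr_sum big_mkcondr /=.
by apply: eq_bigr => t _; case: (Q t).
Qed.

Section CensorshipLaw.
Variables (R : realType) (d : nat) (p : 'I_d -> R).
Variables (T : nat) (a : {ffun 'I_T -> 'I_d}).

Definition coin (t : 'I_T) (b : bool) : R := if b then p (a t) else 1 - p (a t).

Definition flip (s : 'I_T) (x : {ffun 'I_T -> bool}) : {ffun 'I_T -> bool} :=
  [ffun t => if t == s then ~~ x t else x t].

Lemma flipK s : involutive (flip s).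
Proof.
by move=> x; apply/ffunP => t; rewrite !ffunE; case: (t == s); rewrite ?negbK.
Qed.

Lemma probx_sum1 : \sum_x probx p a x = 1.
Proof.
rewrite /probx -(bigA_distr_bigA coin) /=.
by apply: big1 => t _; rewrite big_bool /coin /= addrC subrK.
Qed.

Lemma probx_ge0 : (forall i, 0 <= p i <= 1) -> forall x, 0 <= probx p a x.
Proof.
by move=> p_range x; apply: prodr_ge0 => t _; case: (x t); have := p_range (a t); lra.
Qed.

(* Independence of the censorship indicators: x_s is independent of any
   statistic h that does not look at round s, so E[x_s h] = p_{a_s} E[h]. *)
Lemma mean_indicator_mul (s : 'I_T) (h : {ffun 'I_T -> bool} -> R) :
  (forall x, h (flip s x) = h x) ->
  \sum_x probx p a x * ((x s)%:R * h x) = p (a s) * \sum_x probx p a x * h x.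
Proof.
move=> h_flip.
pose K (x : {ffun 'I_T -> bool}) := \prod_(t | t != s) coin t (x t) * h x.
have probxE x : probx p a x * h x = coin s (x s) * K x.
  by rewrite /probx (bigD1 s) //= mulrA.
have K_flip x : K (flip s x) = K x.
  rewrite /K h_flip; congr (_ * _); apply: eq_bigr => t ts.
  by rewrite ffunE (negbTE ts).
have sum_false : \sum_(x : {ffun 'I_T -> bool} | ~~ x s) K x
                 = \sum_(x : {ffun 'I_T -> bool} | x s) K x.
  rewrite (reindex_inj (inv_inj (flipK s))) /=.
  by apply: eq_big => x; rewrite ?ffunE ?eqxx ?negbK // => _; rewrite K_flip.
have -> : \sum_x probx p a x * h x = \sum_(x : {ffun 'I_T -> bool} | x s) K x.
  rewrite (bigID (fun x : {ffun 'I_T -> bool} => x s)) /=.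
  under eq_bigr => x xs do rewrite probxE /coin xs.
  under [X in _ + X]eq_bigr => x /negbTE xs do rewrite probxE /coin xs.
  by rewrite -!mulr_sumr sum_false -mulrDl addrC subrK mul1r.
rewrite (bigID (fun x : {ffun 'I_T -> bool} => x s)) /= [X in _ + X]big1.
  rewrite addr0 mulr_sumr; apply: eq_bigr => x xs.
  by rewrite mulrCA probxE /coin xs mul1r.
by move=> x /negbTE ->; rewrite mul0r mulr0.
Qed.

Lemma mean_indicator (s : 'I_T) : \sum_x probx p a x * (x s)%:R = p (a s).
Proof.
have := @mean_indicator_mul s (fun _ => 1) (fun _ => erefl).
by under eq_bigr do rewrite mulr1; under [in RHS]eq_bigr do rewrite mulr1;
  rewrite probx_sum1 mulr1.
Qed.

End CensorshipLaw.

Section OfflineValue.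
Variables (R : realType) (d : nat) (p : 'I_d -> R) (lam alpha : R).
Hypotheses (p_gt0 : forall i, 0 < p i) (p_le1 : forall i, p i <= 1).
Hypotheses (lam_gt0 : 0 < lam) (alpha_range : 0 < alpha <= 1).
Variables (T : nat) (a : {ffun 'I_T -> 'I_d}).

Let g := gain lam alpha.

Let p_range i : 0 <= p i <= 1. Proof. by rewrite ltW ?p_le1. Qed.

Lemma EV_by_rounds :
  EV p lam alpha a = \sum_t \sum_x probx p a x * g (Nprev a x t)%:R.
Proof.
rewrite /EV /Valpha; under eq_bigr do rewrite mulr_sumr.
exact: exchange_big.
Qed.

Lemma Nprev_sum_indicator (x : {ffun 'I_T -> bool}) t :
  (Nprev a x t)%:R = \sum_(s : 'I_T | (s < t)%N && (a s == a t)) ((x s)%:R : R).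
Proof.
rewrite -card_sum_indicator /Nprev; congr (_%:R); apply: eq_card => s.
by rewrite !inE andbA.
Qed.

Lemma mean_Nprev t :
  \sum_x probx p a x * (Nprev a x t)%:R
  = p (a t) * (#|[set s : 'I_T | (s < t)%N && (a s == a t)]|)%:R.
Proof.
under eq_bigr do rewrite Nprev_sum_indicator mulr_sumr.
rewrite exchange_big -sum1dep_card natr_sum mulr_sumr /=.
by apply: eq_bigr => s /andP[_ /eqP <-]; rewrite mean_indicator mulr1.
Qed.

(* Lower bound: by Jensen at each round, the censored counts may be replaced
   by their means p_i * k, where k runs over the number of earlier pulls. *)
Lemma EV_ge_allocation :
  \sum_i \sum_(k < #|[set t : 'I_T | a t == i]|) g (p i * k%:R) <= EV p lam alpha a.
Proof.
have jensen t : g (p (a t) * (#|[set s : 'I_T | (s < t)%N && (a s == a t)]|)%:R)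
              <= \sum_x probx p a x * g (Nprev a x t)%:R.
  rewrite -mean_Nprev; apply: gain_jensen => //.
  - exact: probx_ge0.
  - exact: probx_sum1.
rewrite EV_by_rounds; apply: le_trans (ler_sum _ (fun t _ => jensen t)).
rewrite (partition_big (fun t => a t) xpredT) //=; apply: ler_sum => i _.
rewrite -(sum_rank (fun t => a t == i) (fun k => g (p i * k%:R))) le_eqVlt.
apply/orP; left; apply/eqP; apply: eq_bigr => t /eqP at_i; rewrite at_i.
by congr (g (_ * _%:R)); apply: eq_card => s; rewrite !inE at_i.
Qed.

Lemma Nprev_flip (x : {ffun 'I_T -> bool}) t : Nprev a (flip t x) t = Nprev a x t.
Proof.
rewrite /Nprev; apply: eq_card => s; rewrite !inE ffunE.
by case: (s =P t) => [->|]; rewrite ?ltnn.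
Qed.

(* Importance weighting: since N_{a_t}(t-1) does not depend on x_t,
   E[g(N)] = E[x_t g(N)] / p_{a_t}. *)
Lemma EV_censored : EV p lam alpha a =
  \sum_x probx p a x * \sum_t (p (a t))^-1 * ((x t)%:R * g (Nprev a x t)%:R).
Proof.
rewrite EV_by_rounds; under [RHS]eq_bigr do rewrite mulr_sumr.
rewrite [RHS]exchange_big /=; apply: eq_bigr => t _.
have mean_mul : \sum_x probx p a x * ((x t)%:R * g (Nprev a x t)%:R)
               = p (a t) * \sum_x probx p a x * g (Nprev a x t)%:R.
  by apply: mean_indicator_mul => x; rewrite Nprev_flip.
rewrite -[LHS](mulKf (lt0r_neq0 (p_gt0 (a t)))) -mean_mul mulr_sumr.
by apply: eq_bigr => x _; ring.
Qed.

Lemma censored_sum_by_arm (x : {ffun 'I_T -> bool}) :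
  \sum_t (p (a t))^-1 * ((x t)%:R * g (Nprev a x t)%:R)
  = \sum_i (p i)^-1 * \sum_(k < #|[set t : 'I_T | (a t == i) && x t]|) g k%:R.
Proof.
rewrite (partition_big (fun t => a t) xpredT) //=; apply: eq_bigr => i _.
rewrite -(sum_rank (fun t => (a t == i) && x t) (fun k => g k%:R)).
rewrite mulr_sumr big_mkcondr /=; apply: eq_bigr => t /eqP at_i.
case: (x t); last by rewrite mul0r mulr0.
rewrite mul1r at_i; congr (_ * g _%:R).
by apply: eq_card => s; rewrite !inE at_i andbA.
Qed.

Lemma uncensored_by_arm (x : {ffun 'I_T -> bool}) :
  \sum_i (p i)^-1 * (#|[set t : 'I_T | (a t == i) && x t]|)%:R
  = \sum_t (p (a t))^-1 * (x t)%:R.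
Proof.
rewrite [RHS](partition_big (fun t => a t) xpredT) //=.
apply: eq_bigr => i _; rewrite card_sum_indicator mulr_sumr.
by apply: eq_bigr => t /eqP ->.
Qed.

Lemma mean_weighted_uncensored :
  \sum_x probx p a x * \sum_t (p (a t))^-1 * (x t)%:R = T%:R.
Proof.
under eq_bigr do rewrite mulr_sumr.
rewrite exchange_big /= -[T in T%:R]card_ord -sumr_const; apply: eq_bigr => t _.
under eq_bigr do rewrite mulrCA.
by rewrite -mulr_sumr mean_indicator mulVf // gt_eqF.
Qed.

Lemma EV_le : 0 < deff p ->
  EV p lam alpha a <=
  deff p * (lam `^ (- alpha) - psi alpha lam + psi alpha (T%:R / deff p + lam)).
Proof.
move=> D_gt0; set D := deff p; set M := T%:R / D + lam.
have M_gt0 : 0 < M by rewrite /M ltr_wpDl // divr_ge0 // ltW.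
set c := lam `^ (- alpha) - psi alpha lam + psi alpha M.
set K := D * c + M `^ (- alpha) * (D * (lam - M)).
have pathwise (x : {ffun 'I_T -> bool}) :
    \sum_t (p (a t))^-1 * ((x t)%:R * g (Nprev a x t)%:R)
    <= K + M `^ (- alpha) * \sum_t (p (a t))^-1 * (x t)%:R.
  rewrite censored_sum_by_arm -uncensored_by_arm.
  have -> : K + M `^ (- alpha) * \sum_i (p i)^-1 *
                 (#|[set t : 'I_T | (a t == i) && x t]|)%:R
          = \sum_i (p i)^-1 * (c + M `^ (- alpha) *
                 ((#|[set t : 'I_T | (a t == i) && x t]|)%:R + lam - M)).
    rewrite /K /D /deff !mulr_suml !mulr_sumr -!big_split /=.
    by apply: eq_bigr => i _; ring.
  apply: ler_sum => i _; rewrite ler_pM2l ?invr_gt0 //.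
  exact: sum_gain_le_linear.
rewrite EV_censored.
have averaged : \sum_x probx p a x * \sum_t (p (a t))^-1 * ((x t)%:R * g (Nprev a x t)%:R)
  <= \sum_(x : {ffun 'I_T -> bool}) (K * probx p a x +
    M `^ (- alpha) * (probx p a x * \sum_t (p (a t))^-1 * (x t)%:R)).
  apply: ler_sum => x _.
  have := ler_wpM2l (probx_ge0 a p_range x) (pathwise x).
  by rewrite mulrDr mulrCA [K * _]mulrC.
apply: le_trans averaged _.
rewrite big_split /= -!mulr_sumr probx_sum1 mean_weighted_uncensored.
rewrite /K.
have -> : D * (lam - M) = - T%:R by rewrite /M; field; rewrite gt_eqF.
by rewrite mulr1 mulrN subrK.
Qed.

End OfflineValue.

(* Any allocation of at most T pulls is realized by some action sequence:
   list arm i m_i times, in order, and pad arbitrarily. *)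
Lemma allocation_realizable d (i0 : 'I_d) T (m : 'I_d -> nat) :
  (\sum_i m i <= T)%N ->
  exists a : {ffun 'I_T -> 'I_d}, forall i, (m i <= #|[set t : 'I_T | a t == i]|)%N.
Proof.
move=> m_le_T.
pose s := flatten [seq nseq (m i) i | i <- enum 'I_d].
have size_s : size s = (\sum_i m i)%N.
  rewrite /s size_flatten /shape -map_comp sumnE big_map big_enum /=.
  by apply: eq_bigr => i _; rewrite /= size_nseq.
have count_s i : count_mem i s = m i.
  rewrite /s count_flatten -map_comp sumnE big_map big_enum /=.
  rewrite (bigD1 i) //= big1 ?addn0; first by rewrite count_nseq /= eqxx mul1n.
  by move=> j /negbTE ji; rewrite count_nseq /= ji mul0n.
have size_le_T : (size s <= T)%N by rewrite size_s.
exists [ffun t : 'I_T => nth i0 s t] => i.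
rewrite -count_s -sum1_count (big_nth i0) big_mkord -sum1dep_card.
rewrite big_mkcond [X in (_ <= X)%N]big_mkcond /=.
rewrite (big_ord_widen _ (fun j => if nth i0 s j == i then 1%N else 0%N) size_le_T).
rewrite [X in (X <= _)%N]big_mkcond /=.
by apply: leq_sum => j _; rewrite ffunE; case: (j < size s)%N; case: (_ == i).
Qed.

Section OptimalValue.
Variables (R : realType) (d : nat) (p : 'I_d -> R) (lam alpha : R).
Hypotheses (d_gt0 : (0 < d)%N) (p_gt0 : forall i, 0 < p i) (p_le1 : forall i, p i <= 1).
Hypotheses (lam_gt0 : 0 < lam) (alpha_range : 0 < alpha <= 1).

Lemma deff_gt0 : 0 < deff p.
Proof.
rewrite /deff (bigD1 (Ordinal d_gt0)) //= ltr_pwDl ?invr_gt0 //.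
by apply: sumr_ge0 => i _; rewrite invr_ge0 ltW.
Qed.

Let D := deff p.
Let X T := T%:R / D + lam.

Let X_ge_lam T : lam <= X T.
Proof. by rewrite lerDr divr_ge0 // ltW // deff_gt0. Qed.

Lemma OptOff_le T :
  OptOff p lam alpha T <= D * (lam `^ (- alpha) - psi alpha lam + psi alpha (X T)).
Proof.
have D_gt0 := deff_gt0.
apply: bigmax_le => [|a _]; last exact: EV_le.
rewrite mulr_ge0 ?(ltW D_gt0) // -addrA addr_ge0 ?powR_ge0 // addrC subr_ge0.
by rewrite psi_le ?X_ge_lam.
Qed.

Let alloc T i := Num.truncn (T%:R / (D * p i)).

Lemma alloc_le T : (\sum_i alloc T i <= T)%N.
Proof.
have D_gt0 := deff_gt0.
rewrite -(ler_nat R) natr_sum.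
apply: le_trans (_ : \sum_i T%:R / D * (p i)^-1 <= _).
  apply: ler_sum => i _.
  by rewrite -mulrA -invfM /alloc truncn_le divr_ge0 // mulr_ge0 // ltW.
by rewrite -mulr_sumr divfK ?gt_eqF.
Qed.

Lemma alloc_psi_ge T i : D <= T%:R ->
  psi alpha (X T) - lam `^ (- alpha) <= psi alpha (p i * (alloc T i)%:R + lam).
Proof.
move=> D_le_T; have D_gt0 := deff_gt0.
have T_D_ge1 : 1 <= T%:R / D by rewrite ler_pdivlMr ?mul1r.
have X1_ge_lam : lam <= X T - 1 by rewrite /X; lra.
have X1_gt0 : 0 < X T - 1 by apply: lt_le_trans X1_ge_lam.
have X1_le : X T - 1 <= p i * (alloc T i)%:R + lam.
  have := truncnS_gt (T%:R / (D * p i)); rewrite -/(alloc T i) -natr1.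
  rewrite invfM mulrA ltr_pdivrMr // mulrDl mul1r [_ * p i]mulrC.
  by have := p_le1 i; rewrite /X; lra.
have := psi_le alpha_range X1_gt0 X1_le.
have := psi_le_tangent alpha_range X1_gt0 (lt_le_trans lam_gt0 (X_ge_lam T)).
rewrite (_ : X T - (X T - 1) = 1) ?mulr1; last by ring.
have := powRN_le alpha_range lam_gt0 X1_ge_lam.
lra.
Qed.

Lemma OptOff_ge T : D <= T%:R ->
  D * (psi alpha (X T) - lam `^ (- alpha) - psi alpha lam) <= OptOff p lam alpha T.
Proof.
move=> D_le_T.
have [a a_alloc] := allocation_realizable (Ordinal d_gt0) (alloc_le T).
apply: le_trans (le_bigmax 0 (fun a => EV p lam alpha a) a).
apply: le_trans (EV_ge_allocation p_gt0 p_le1 lam_gt0 alpha_range a).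
rewrite /D /deff mulr_suml; apply: ler_sum => i _.
(* only the first alloc T i pulls of arm i are needed *)
apply: le_trans (_ : _ <= \sum_(k < alloc T i) gain lam alpha (p i * k%:R)) _.
  apply: le_trans (sum_gain_scaled_ge lam_gt0 alpha_range _ (p_gt0 i)).
  by rewrite [_ / p i]mulrC ler_pM2l ?invr_gt0 // lerD2r alloc_psi_ge.
rewrite (big_ord_widen _ (fun k => gain lam alpha (p i * k%:R)) (a_alloc i)).
rewrite [X in _ <= X](bigID (fun k : 'I_ _ => (k < alloc T i)%N)) /=.
by rewrite lerDl sumr_ge0 // => k _; apply: gain_ge0.
Qed.

Lemma OptOff_close T : D <= T%:R ->
  `|D * psi alpha (X T) - OptOff p lam alpha T|
  <= D * (lam `^ (- alpha) + `|psi alpha lam|).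
Proof.
move=> D_le_T; have D_ge0 := ltW deff_gt0.
have := OptOff_le T; have := OptOff_ge D_le_T.
have := ler_wpM2l D_ge0 (ler_norm (psi alpha lam)).
have := ler_wpM2l D_ge0 (ler_norm (- psi alpha lam)).
rewrite /D normrN ler_norml !mulrDr !mulrN; lra.
Qed.

End OptimalValue.

Local Open Scope classical_set_scope.

Lemma ratio_cvg1 (R : realType) (u v : nat -> R) (C : R) :
  (forall K, \forall n \near \oo, K <= v n) ->
  (\forall n \near \oo, `|v n - u n| <= C) ->
  (fun n => u n / v n) @ \oo --> (1 : R).
Proof.
move=> v_div uv_close; apply/cvgrPdist_le => e e_gt0.
near=> n.
have v_ge1 : 1 <= v n by near: n; exact: v_div.
have v_ge : C / e <= v n by near: n; exact: v_div.
have v_gt0 : 0 < v n by apply: lt_le_trans v_ge1.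
have -> : 1 - u n / v n = (v n - u n) / v n by rewrite mulrBl divff ?gt_eqF.
rewrite normrM normfV (gtr0_norm v_gt0) ler_pdivrMr //.
apply: (@le_trans _ _ C); first by near: n; exact: uv_close.
by rewrite mulrC -ler_pdivrMr.
Unshelve. all: by end_near.
Qed.

Unset Implicit Arguments.

Theorem lemma3 (R : realType) (d : nat) (p : 'I_d -> R) (lam alpha : R) :
  (0 < d)%N ->
  (forall a, 0 < p a <= 1) ->
  0 < lam ->
  0 < alpha <= 1 ->
  (fun T : nat => OptOff p lam alpha T /
      (deff p * psi alpha (T%:R / deff p + lam))) @ \oo --> (1%:R : R).
Proof.
move=> d_gt0 p_range lam_gt0 alpha_range.
have p_gt0 i : 0 < p i by case/andP: (p_range i).
have p_le1 i : p i <= 1 by case/andP: (p_range i).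
have D_gt0 := deff_gt0 d_gt0 p_gt0.
apply: (@ratio_cvg1 _ _ _ (deff p * (lam `^ (- alpha) + `|psi alpha lam|))).
-
  move=> K; have [X0 psi_ge] := psi_unbounded alpha_range (K / deff p).
  near=> T; rewrite -ler_pdivrMl // mulrC; apply: psi_ge.
  have : X0 <= T%:R / deff p by rewrite ler_pdivlMr //; near: T; exact: nbhs_infty_ger.
  lra.
-
  near=> T; apply: OptOff_close => //.
  by near: T; exact: nbhs_infty_ger.
Unshelve. all: by end_near.
Qed.
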